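(* Let $n\ge 1$ and let $y\in\mathbb{R}^n$ satisfy $y_1\ge y_2\ge\cdots\ge y_n\ge 0$ and $y_1>0$. Define $f:(0,+\infty)\to\mathbb{R}$ by $$f(\lambda)=\sum_{i=1}^n \max\left\{1,\left(y_i/\sqrt{\lambda}\right)^2\right\}.$$ The function $f$ is continuous and strictly decreasing on $(0,y_1^2]$, with $f(\lambda)\to+\infty$ as $\lambda\to 0^+$ and $f(y_1^2)=n$. Let $C\ge\sqrt{n}$, let $\lambda(C)$ be the unique $\lambda\in(0,y_1^2]$ with $f(\lambda)=C^2$, and let $k(C)$ be the maximum index $k$ such that $y_k>\sqrt{\lambda(C)}$. Then $$\min_{q\in\mathcal{Q}}\ \max_{\sigma\in\mathbb{R}^n,\ \|\sigma\|_2\le 1}\ \sum_{i=1}^n\left(\sigma_i\frac{y_i}{q_i}\right)^2=\lambda(C),\qquad \mathcal{Q}=\{q\in\mathbb{R}^n:\ q_i\ge 1\ \forall i,\ \|q\|_2\le C\},$$ and the minimum over $q$ is attained by $$q_k=\begin{cases} y_k/\sqrt{\lambda(C)} & \text{if } k\le k(C),\\ 1 & \text{otherwise.}\end{cases}$$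
   Context: Here $\|\cdot\|_2$ is the Euclidean norm. In the paper, $y$ is a vector of nonnegative node ''centralities'' (e.g. column norms of a matrix $(I-\Lambda)^{-1}D$, or the vector $n^{-1}((I-\Lambda)^{-1}D)'\mathbf{1}$), $q$ is a protection vector and $\sigma$ a vector of shock standard deviations. *)

From HB Require Import structures.
From mathcomp Require Import all_boot all_order all_algebra.
From mathcomp Require Import all_classical all_reals all_analysis.
Set Implicit Arguments. Unset Strict Implicit. Unset Printing Implicit Defensive.
Import Order.TTheory GRing.Theory Num.Theory.
Import numFieldNormedType.Exports.
Local Open Scope ring_scope.

(* Vectors in R^m are functions 'I_m -> R; index i : 'I_m is the paper's i+1. *)

Definition norm2 (R : realType) (m : nat) (v : 'I_m -> R) : R :=
  Num.sqrt (\sum_(i < m) v i ^+ 2).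

Definition fC (R : realType) (m : nat) (y : 'I_m -> R) (lam : R) : R :=
  \sum_(i < m) Num.max 1 ((y i / Num.sqrt lam) ^+ 2).

Definition Qset (R : realType) (m : nat) (C : R) : set ('I_m -> R) :=
  [set q | (forall i, 1 <= q i) /\ norm2 q <= C].

Definition obj (R : realType) (m : nat) (y q sigma : 'I_m -> R) : R :=
  \sum_(i < m) (sigma i * (y i / q i)) ^+ 2.

Definition is_inner_max (R : realType) (m : nat) (y q : 'I_m -> R) (v : R) : Prop :=
  (exists sigma : 'I_m -> R, norm2 sigma <= 1 /\ obj y q sigma = v) /\
  (forall sigma : 'I_m -> R, norm2 sigma <= 1 -> obj y q sigma <= v).

(* k(C): the maximum (1-based) index k with y_k > sqrt lambda; 0 if none *)
Definition kC (R : realType) (m : nat) (y : 'I_m -> R) (lam : R) : nat :=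
  \max_(i < m | Num.sqrt lam < y i) i.+1.

(* the optimal protection vector; 0-based i corresponds to k = i+1 *)
Definition qstar (R : realType) (m : nat) (y : 'I_m -> R) (lam : R) : 'I_m -> R :=
  fun i => if (i.+1 <= kC y lam)%N then y i / Num.sqrt lam else 1.

From HB Require Import structures.
From mathcomp Require Import all_boot all_order all_algebra.
From mathcomp Require Import all_classical all_reals all_analysis.
From mathcomp Require Import lra.
Import Order.TTheory GRing.Theory Num.Theory.
Import numFieldNormedType.Exports.
Local Open Scope classical_set_scope.
Local Open Scope ring_scope.

(* Every term [max 1 (y_i^2 / l)] of [f] is nonincreasing in [l], and the one
   of the largest [y_i] is strictly decreasing on [(0, y_1^2]]; hence [f] is a
   decreasing bijection onto [[n, +oo)].  For any [q], the inner maximum puts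
   all the mass of [sigma] on the largest coefficient, so it equals
   [max_i (y_i / q_i)^2].  The vector [q*] caps every coefficient at [lambda],
   reaches it at [i = 1], and has [||q*||^2 = f(lambda) = C^2].  Conversely,
   if [q] in [Q] had inner maximum [v < lambda], then [q_i^2 >= max(1, y_i^2/v)]
   for all [i], so [C^2 >= f(v) > f(lambda) = C^2]. *)

Lemma ler_sqrt_sqr (R : rcfType) (a c : R) :
  0 <= c -> (Num.sqrt a <= c) = (a <= c ^+ 2).
Proof. by move=> c0; rewrite -(ler_sqrt a) ?sqr_ge0 // sqrtr_sqr ger0_norm. Qed.

Lemma norm2_le (R : realType) m (v : 'I_m -> R) c :
  0 <= c -> (norm2 v <= c) = (\sum_(i < m) v i ^+ 2 <= c ^+ 2).
Proof. exact: ler_sqrt_sqr. Qed.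

Definition unit_vec (R : nzSemiRingType) m (j : 'I_m) : 'I_m -> R :=
  fun i => (i == j)%:R.
Arguments unit_vec R {m} j.

Section Profile.
Context {R : realType} {m : nat} {y : 'I_m -> R}.

Lemma fCE l : 0 < l -> fC y l = \sum_(i < m) Num.max 1 (y i ^+ 2 / l).
Proof. by move=> l0; apply: eq_bigr => i _; rewrite expr_div_n sqr_sqrtr ?ltW. Qed.

Lemma fC_continuous x : 0 < x -> {for x, continuous (fC y)}.
Proof.
move=> x0; apply: (@cvg_big _ _ +%R 0 xpredT); first exact: add_continuous.
move=> i _; apply: (@continuous_max _ _ (fun=> 1) (fun t => (y i / Num.sqrt t) ^+ 2)).
  exact: cvg_cst.
have yV : {for x, continuous (fun t => y i / Num.sqrt t)}.
  apply: cvgM; first exact: cvg_cst.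
  by apply: cvgV; [rewrite sqrtr_eq0 -ltNge | exact: sqrt_continuous].
exact: (cvgM yV yV).
Qed.

Lemma sqr_div_le_fC j {l} : 0 < l -> y j ^+ 2 / l <= fC y l.
Proof.
move=> l0; rewrite fCE // (bigD1 j) //= -[leLHS]addr0.
by apply: lerD; [rewrite le_max lexx orbT | apply: sumr_ge0 => i _; rewrite le_max ler01].
Qed.

Lemma fC_ltr {j a b} : 0 < a -> a < b -> b <= y j ^+ 2 -> fC y b < fC y a.
Proof.
move=> a0 ab bj; have b0 : 0 < b := lt_trans a0 ab.
rewrite !fCE // (bigD1 j) // [ltRHS](bigD1 j) //=.
apply: ltr_leD.
  have yj0 : 0 < y j ^+ 2 := lt_le_trans b0 bj.
  have bj1 : 1 <= y j ^+ 2 / b by rewrite ler_pdivlMr // mul1r.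
  have ba : y j ^+ 2 / b < y j ^+ 2 / a by rewrite ltr_pM2l // ltf_pV2 ?posrE.
  by rewrite !max_r // (le_trans bj1) // ltW.
apply: ler_sum => i _; rewrite ge_max !le_max lexx /=.
by apply/orP; right; rewrite ler_wpM2l ?sqr_ge0 // lef_pV2 ?posrE // ltW.
Qed.

Lemma fC_inj j a b : 0 < a <= y j ^+ 2 -> 0 < b <= y j ^+ 2 ->
  fC y a = fC y b -> a = b.
Proof.
move=> /andP[a0 aj] /andP[b0 bj] fab.
by case: (ltgtP a b) => // [ab | ba];
  [have := fC_ltr a0 ab bj | have := fC_ltr b0 ba aj]; rewrite fab ltxx.
Qed.

Lemma fC_eq_dim l : 0 < l -> (forall i, y i ^+ 2 <= l) -> fC y l = m%:R.
Proof.
move=> l0 yl; rewrite fCE // (eq_bigr (fun=> 1)) ?sumr_const ?card_ord // => i _.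
by rewrite max_l // ler_pdivrMr // mul1r.
Qed.

Lemma fC_at_right0 j : 0 < y j -> fC y x @[x --> 0^'+] --> +oo.
Proof.
move=> yj0; apply/cvgryPge => M.
have yj20 : 0 < y j ^+ 2 by rewrite exprn_gt0.
have M1 : 0 < `|M| + 1 by rewrite ltr_wpDl.
near=> x.
have x0 : 0 < x by near: x; exact: nbhs_right_gt.
have : x < y j ^+ 2 / (`|M| + 1).
  by near: x; apply: nbhs_right_lt; rewrite divr_gt0.
rewrite ltr_pdivlMr // => xM.
apply: (le_trans _ (sqr_div_le_fC j x0)); rewrite ler_pdivlMr //.
have := ler_norm M; have := normr_ge0 M; nra.
Unshelve. all: by end_near. Qed.

Lemma exists_fC_eq j c : 0 < y j -> fC y (y j ^+ 2) <= c ->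
  exists2 l, 0 < l <= y j ^+ 2 & fC y l = c.
Proof.
move=> yj0 fjc; have yj20 : 0 < y j ^+ 2 by rewrite exprn_gt0.
have c0 : 0 <= c.
  by apply: (le_trans _ fjc); apply: (le_trans _ (sqr_div_le_fC j yj20)); rewrite divff ?gt_eqF.
set e := y j ^+ 2 / (c + 1).
have e0 : 0 < e by rewrite divr_gt0 // ltr_wpDl.
have ej : e <= y j ^+ 2 by rewrite ler_pdivrMr ?ltr_wpDl //; nra.
have cfe : c <= fC y e.
  apply: (le_trans _ (sqr_div_le_fC j e0)).
  by rewrite /e invf_div mulrCA divff ?gt_eqF // mulr1 lerDl.
have [l] : exists2 l, l \in `[e, y j ^+ 2] & fC y l = c.
  apply: IVT => //; last by rewrite ge_min le_max fjc cfe !orbT.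
  apply: continuous_in_subspaceT => t; rewrite inE /= in_itv /= => /andP[et _].
  exact/fC_continuous/(lt_le_trans e0).
by rewrite in_itv /= => /andP[el lj] flc; exists l; rewrite ?(lt_le_trans e0 el).
Qed.

Lemma fC_le_sumsq {q : 'I_m -> R} {v} : 0 < v -> (forall i, 1 <= q i) ->
  (forall i, (y i / q i) ^+ 2 <= v) -> fC y v <= \sum_(i < m) q i ^+ 2.
Proof.
move=> v0 q1 yqv; rewrite fCE //; apply: ler_sum => i _.
have q0 : 0 < q i := lt_le_trans ltr01 (q1 i).
rewrite ge_max; apply/andP; split; first by have := q1 i; nra.
by rewrite ler_pdivrMr // mulrC -ler_pdivrMr ?exprn_gt0 // -expr_div_n.
Qed.

End Profile.

Section InnerMax.
Context {R : realType} {m : nat} {y q : 'I_m -> R}.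

Lemma norm2_unit_vec (j : 'I_m) : norm2 (unit_vec R j) = 1.
Proof.
rewrite /norm2 (bigD1 j) //= big1 => [|i /negbTE ij]; last by rewrite /unit_vec ij expr0n.
by rewrite /unit_vec eqxx expr1n addr0 sqrtr1.
Qed.

Lemma obj_unit_vec (j : 'I_m) : obj y q (unit_vec R j) = (y j / q j) ^+ 2.
Proof.
rewrite /obj (bigD1 j) //= big1 => [|i /negbTE ij]; last by rewrite /unit_vec ij mul0r expr0n.
by rewrite /unit_vec eqxx mul1r addr0.
Qed.

Lemma obj_le sigma M : 0 <= M -> (forall i, (y i / q i) ^+ 2 <= M) ->
  norm2 sigma <= 1 -> obj y q sigma <= M.
Proof.
move=> M0 yqM; rewrite norm2_le // expr1n => s1.
apply: (@le_trans _ _ (\sum_(i < m) sigma i ^+ 2 * M)).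
  by apply: ler_sum => i _; rewrite exprMn ler_wpM2l ?sqr_ge0.
by rewrite -mulr_suml; nra.
Qed.

Lemma is_inner_max_coef j v : (y j / q j) ^+ 2 = v ->
  (forall i, (y i / q i) ^+ 2 <= v) -> is_inner_max y q v.
Proof.
move=> <- yqj; split; first by exists (unit_vec R j); rewrite norm2_unit_vec obj_unit_vec.
by move=> sigma; apply: obj_le; rewrite ?sqr_ge0.
Qed.

Lemma is_inner_max_ge {v} i : is_inner_max y q v -> (y i / q i) ^+ 2 <= v.
Proof. by move=> [_ ub]; rewrite -obj_unit_vec ub ?norm2_unit_vec. Qed.

Lemma inner_max_exists (i0 : 'I_m) : exists v, is_inner_max y q v.
Proof.
have [j _ jmax] := @arg_maxP _ R _ i0 xpredT (fun i => (y i / q i) ^+ 2) isT.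
by exists ((y j / q j) ^+ 2); apply: (is_inner_max_coef j) => // i; apply: jmax.
Qed.

Lemma le_inner_max {j lam v} : 0 < lam <= y j ^+ 2 -> (forall i, 1 <= q i) ->
  \sum_(i < m) q i ^+ 2 <= fC y lam -> is_inner_max y q v -> lam <= v.
Proof.
move=> /andP[lam0 lamj] q1 qlam vmax; rewrite leNgt; apply/negP => vlam.
have v0 : 0 < v.
  apply: (lt_le_trans _ (is_inner_max_ge j vmax)).
  have qj0 : 0 < q j := lt_le_trans ltr01 (q1 j).
  have yj20 : 0 < y j ^+ 2 := lt_le_trans lam0 lamj.
  by rewrite expr_div_n divr_gt0 // exprn_gt0.
have := fC_le_sumsq v0 q1 (fun i => is_inner_max_ge i vmax).
by move=> /le_trans/(_ qlam); rewrite leNgt (fC_ltr v0 vlam lamj).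
Qed.

End InnerMax.

Section OptimalProtection.
Context {R : realType} {m : nat} {y : 'I_m -> R}.
Hypothesis y_nonincr : forall i j : 'I_m, (i <= j)%N -> y j <= y i.
Hypothesis y_ge0 : forall i, 0 <= y i.
Context {lam : R}.
Hypothesis lam_gt0 : 0 < lam.

Let s := Num.sqrt lam.
Let s_gt0 : 0 < s. Proof. by rewrite sqrtr_gt0. Qed.
Let s_sqr : s ^+ 2 = lam. Proof. by rewrite sqr_sqrtr // ltW. Qed.

Lemma leq_kC (i : 'I_m) : (i.+1 <= kC y lam)%N = (s < y i).
Proof.
apply/idP/idP => [|syi]; last exact: leq_bigmax_cond.
apply: contraLR; rewrite -leNgt -ltnNge ltnS => yis.
apply/bigmax_leqP => j sj; rewrite ltnNge; apply/negP => ij.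
by rewrite ltNge (le_trans (y_nonincr _ _ ij) yis) in sj.
Qed.

Lemma qstarE i : qstar y lam i = if s < y i then y i / s else 1.
Proof. by rewrite /qstar leq_kC. Qed.

Lemma qstar_ge1 i : 1 <= qstar y lam i.
Proof. by rewrite qstarE; case: ifP => // /ltW; rewrite ler_pdivlMr // mul1r. Qed.

Lemma qstar_sqr i : qstar y lam i ^+ 2 = Num.max 1 ((y i / s) ^+ 2).
Proof.
have ys0 : 0 <= y i / s by rewrite divr_ge0 // ltW.
rewrite qstarE; case: ltP => [syi | yis].
  have ys1 : 1 <= y i / s by rewrite ler_pdivlMr // mul1r ltW.
  by rewrite max_r // exprn_ege1.
have ys1 : y i / s <= 1 by rewrite ler_pdivrMr // mul1r.
by rewrite expr1n max_l // exprn_ile1.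
Qed.

Lemma norm2_qstar : norm2 (qstar y lam) = Num.sqrt (fC y lam).
Proof. by rewrite /norm2 (eq_bigr _ (fun i _ => qstar_sqr i)). Qed.

Lemma qstar_coef_eq i : s <= y i -> (y i / qstar y lam i) ^+ 2 = lam.
Proof.
rewrite qstarE le_eqVlt => /orP[/eqP <- | syi]; last first.
  by rewrite syi invf_div mulrC divfK ?gt_eqF ?(lt_trans s_gt0).
by rewrite ltxx divr1.
Qed.

Lemma qstar_coef_le i : (y i / qstar y lam i) ^+ 2 <= lam.
Proof.
case: (leP s (y i)) => [/qstar_coef_eq -> // | yis].
by rewrite qstarE ltNge (ltW yis) /= divr1 -s_sqr lerXn2r ?nnegrE ?(ltW yis) ?(ltW s_gt0).
Qed.

End OptimalProtection.

Theorem theorem1 (R : realType) (n : nat) (y : 'I_n.+1 -> R)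
  (hmono : forall i j : 'I_n.+1, (i <= j)%N -> y j <= y i)
  (hnonneg : forall i, 0 <= y i)
  (hpos : 0 < y ord0) :
  {within `]0, y ord0 ^+ 2], continuous fC y} /\
  {in `]0, y ord0 ^+ 2] &, forall a b, a < b -> fC y b < fC y a} /\
  (fC y x @[x --> 0^'+] --> +oo) /\
  fC y (y ord0 ^+ 2) = n.+1%:R /\
  forall C : R, Num.sqrt n.+1%:R <= C ->
    (exists! lam : R, 0 < lam <= y ord0 ^+ 2 /\ fC y lam = C ^+ 2) /\
    forall lam : R, 0 < lam <= y ord0 ^+ 2 -> fC y lam = C ^+ 2 ->
      (forall q, Qset C q -> exists v, is_inner_max y q v) /\
      Qset C (qstar y lam) /\
      is_inner_max y (qstar y lam) lam /\
      (forall q v, Qset C q -> is_inner_max y q v -> lam <= v).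
Proof.
have y_le_y0 i : y i ^+ 2 <= y ord0 ^+ 2 by rewrite lerXn2r ?nnegrE ?hmono.
have f_top : fC y (y ord0 ^+ 2) = n.+1%:R by rewrite fC_eq_dim ?card_ord ?exprn_gt0.
split.
  apply: continuous_in_subspaceT => x; rewrite inE /= in_itv /= => /andP[x0 _].
  exact: fC_continuous.
split; first by move=> a b; rewrite !in_itv /= => /andP[a0 _] /andP[_ b1] ab; apply: fC_ltr a0 ab b1.
split; first exact: fC_at_right0 hpos.
split => // C nC; have C0 : 0 <= C := le_trans (sqrtr_ge0 _) nC.
split.
  have [l l_in fl] : exists2 l, 0 < l <= y ord0 ^+ 2 & fC y l = C ^+ 2.
    by apply: exists_fC_eq hpos _; rewrite f_top -ler_sqrt_sqr.
  by exists l; split => // l' [l'_in fl']; apply: fC_inj l_in l'_in _; rewrite fl fl'.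
move=> lam lam_in flam; have /andP[lam0 lam_y0] := lam_in.
have s_y0 : Num.sqrt lam <= y ord0 by rewrite ler_sqrt_sqr ?hnonneg.
split; first by move=> q _; apply: inner_max_exists ord0.
split.
  split; first exact: qstar_ge1.
  by rewrite (norm2_qstar hmono hnonneg lam0) flam sqrtr_sqr ger0_norm.
split.
  apply: (is_inner_max_coef ord0); first exact: qstar_coef_eq.
  exact: qstar_coef_le.
by move=> q v [q1 qC] vmax; apply: (le_inner_max lam_in q1 _ vmax); rewrite flam -norm2_le.
Qed.
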